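(* Let $\{E_\chi\}_{\chi\in\hat G}\subset\mathcal{P}_n$ be a maximal and non-degenerate correctable set of unitary Pauli errors with $E_1=I$ and $E_\chi(\mathcal{H}_{\rm pn})\subset\mathcal{H}_{\rm pn}^\perp$ for $\chi\ne1$. Let $h:\hat G\times G\to G$ be such that for every $g\in G$, $h(\cdot,g):\hat G\to G$ is a bijection with $h(1,g)=g$. Then for every $g\in G$ the operator $\hat E_g:=\sqrt{2^{n-k}}\sum_{\chi\in\hat G}\hat P_{h(\chi,g)}\Pi_{\rm pn}E_\chi$ is unitary on $\mathcal{H}_{\rm kin}$ and satisfies $\hat E_g\Pi_{\rm pn}=\sqrt{2^{n-k}}\hat P_g\Pi_{\rm pn}$.
   Context: Let $n\ge1$, $0\le k<n$, $\mathcal{H}_{\rm kin}=(\mathbb{C}^2)^{\otimes n}$, $\mathcal{P}_n$ the $n$-qubit Pauli group, $G=\mathbb{Z}_2^{\times(n-k)}$, $U:G\to\mathcal{P}_n$, $g\mapsto U^g$, a faithful unitary representation with $-I\notin U(G)$; $\mathcal{H}_{\rm pn}=\{\psi:U^g\psi=\psi\ \forall g\}$, $\Pi_{\rm pn}=\frac1{|G|}\sum_gU^g$. $\hat G$ is the group of characters $\chi:G\to\{\pm1\}$ with trivial character $1$. $\hat U$ is a unitary representation of $\hat G$ on $\mathcal{H}_{\rm kin}$ dual to $U$ ($U^g\hat U^\chi=\chi(g)\hat U^\chi U^g$), and $\hat P_g=\frac1{2^{n-k}}\sum_\chi\chi(g)\hat U^\chi$. A set $\{E_i\}$ is correctable if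 $\Pi_{\rm pn}E_i^\dagger E_j\Pi_{\rm pn}=C_{ij}\Pi_{\rm pn}$ with $(C_{ij})$ Hermitian; maximal if $\mathrm{rank}(C)=2^{n-k}$; non-degenerate if $C$ is invertible. *)

From HB Require Import structures.
From mathcomp Require Import all_boot all_order all_algebra all_field.
Set Implicit Arguments. Unset Strict Implicit. Unset Printing Implicit Defensive.
Import GRing.Theory Num.Theory.
Local Open Scope ring_scope.

Definition dag (m n : nat) (A : 'M[algC]_(m, n)) : 'M[algC]_(n, m) :=
  (map_mx (@Num.conj_op algC) A)^T.

Definition unitary (N : nat) (A : 'M[algC]_N) : Prop :=
  dag A *m A = 1%:M /\ A *m dag A = 1%:M.

(* Single-qubit Pauli matrices: 0 = I, 1 = X, 2 = Y, 3 = Z. *)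
Definition sigma (a : 'I_4) : 'M[algC]_2 :=
  \matrix_(i, j)
    match val a with
    | 0 => (i == j)%:R
    | 1 => (i != j)%:R
    | 2 => if i == j then 0 else if val i == 0 then - 'i else 'i
    | _ => if i == j then (if val i == 0 then 1 else -1) else 0
    end.

(* q-th bit of a computational basis index of (C^2)^{\otimes n}. *)
Definition qbit (n : nat) (q : nat) (i : 'I_(2 ^ n)) : 'I_2 :=
  inord ((i %/ 2 ^ q) %% 2).

(* Tensor product sigma_{a_0} (x) ... (x) sigma_{a_{n-1}}, written entrywise. *)
Definition pauli_string (n : nat) (a : n.-tuple 'I_4) : 'M[algC]_(2 ^ n) :=
  \matrix_(i, j) \prod_(q < n) sigma (tnth a q) (qbit q i) (qbit q j).

Definition pauli_group (n : nat) (M : 'M[algC]_(2 ^ n)) : Prop :=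
  exists (c : 'I_4) (a : n.-tuple 'I_4), M = 'i ^+ c *: pauli_string a.

(* G = Z_2^m realised as the additive group 'rV['F_2]_m. *)
(* Characters chi : G -> {+1,-1} are encoded as boolean functions
   (true <-> -1) that are homomorphisms to (bool, xor). *)
Definition is_charb (m : nat) (f : {ffun 'rV['F_2]_m -> bool}) : bool :=
  [forall g, forall h, f (g + h) == addb (f g) (f h)].

Definition Ghat (m : nat) := {f : {ffun 'rV['F_2]_m -> bool} | is_charb f}.

Definition chi_val (m : nat) (chi : Ghat m) (g : 'rV['F_2]_m) : algC :=
  (-1) ^+ (val chi g).

Definition is_triv (m : nat) (chi : Ghat m) : Prop :=
  forall g, chi_val chi g = 1.

Definition Pi_pn (N m : nat) (U : 'rV['F_2]_m -> 'M[algC]_N) : 'M[algC]_N :=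
  (#|{: 'rV['F_2]_m}|%:R)^-1 *: \sum_g U g.

Definition Phat (N m : nat) (Uh : Ghat m -> 'M[algC]_N) (g : 'rV['F_2]_m)
  : 'M[algC]_N :=
  ((2 ^ m)%:R)^-1 *: \sum_(chi : Ghat m) chi_val chi g *: Uh chi.

(* Since the E_chi are Pauli operators, E_chi^dag E_psi commutes or anticommutes with
   every stabilizer U^g, so Pi E_chi^dag E_psi Pi is either 0 or E_chi^dag E_psi Pi;
   invertibility of C then forces Pi E_chi^dag E_psi Pi = delta_{chi,psi} Pi.  Hence the
   E_chi Pi E_chi^dag are mutually orthogonal projections, and comparing traces with
   1 = sum_chi hatU^chi Pi hatU^chi shows that they add up to 1.  The hatP_g are
   orthogonal projections with Pi hatP_g Pi = 2^-(n-k) Pi and h(., g) is injective, so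
   the cross terms of hatE_g^dag hatE_g vanish and it equals
   sum_chi E_chi^dag Pi E_chi = 1.  Finally Pi E_chi Pi = 0 for chi <> 1, so only the
   chi = 1 term survives in hatE_g Pi. *)

From HB Require Import structures.
From mathcomp Require Import all_boot all_order all_algebra all_field.
From mathcomp Require Import ring.
Set Implicit Arguments. Unset Strict Implicit. Unset Printing Implicit Defensive.
Import GRing.Theory Num.Theory.
Local Open Scope ring_scope.

Lemma dagM m n p (A : 'M[algC]_(m, n)) (B : 'M[algC]_(n, p)) :
  dag (A *m B) = dag B *m dag A.
Proof. by rewrite /dag map_mxM trmx_mul. Qed.

Lemma dagZ m n (a : algC) (A : 'M[algC]_(m, n)) : dag (a *: A) = a^* *: dag A.
Proof. by rewrite /dag map_mxZ linearZ. Qed.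

Lemma dagB m n (A B : 'M[algC]_(m, n)) : dag (A - B) = dag A - dag B.
Proof. by rewrite /dag !raddfB. Qed.

Lemma dag_sum m n (I : finType) (F : I -> 'M[algC]_(m, n)) :
  dag (\sum_i F i) = \sum_i dag (F i).
Proof. by rewrite /dag !raddf_sum. Qed.

Lemma dag1 n : dag (1%:M : 'M[algC]_n) = 1%:M.
Proof. by rewrite /dag map_mx1 trmx1. Qed.

Lemma dagK m n (A : 'M[algC]_(m, n)) : dag (dag A) = A.
Proof. by rewrite /dag map_trmx trmxK -map_mx_comp map_mx_id // => x /=; rewrite conjCK. Qed.

Lemma mxtrace_dag_mul_eq0 m n (A : 'M[algC]_(m, n)) : \tr (dag A *m A) = 0 -> A = 0.
Proof.
have nneg i j : 0 <= `|A i j| ^+ 2 by rewrite exprn_ge0.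
have -> : \tr (dag A *m A) = \sum_j \sum_i `|A i j| ^+ 2.
  by apply: eq_bigr => j _; rewrite mxE; apply: eq_bigr => i _; rewrite !mxE normCK mulrC.
move=> sum0; apply/matrixP => i j; rewrite mxE.
have col0 := psumr_eq0P (fun j _ => sumr_ge0 _ (fun i _ => nneg i j)) sum0 (i:=j) isT.
have /eqP := psumr_eq0P (fun i _ => nneg i j) col0 (i:=i) isT.
by rewrite expf_eq0 normr_eq0 => /eqP.
Qed.

Lemma herm_idem_mxtrace0 n (A : 'M[algC]_n) :
  dag A = A -> A *m A = A -> \tr A = 0 -> A = 0.
Proof. by move=> herm idem tr0; apply: mxtrace_dag_mul_eq0; rewrite herm idem. Qed.

Lemma unitary_sqr1_herm n (A : 'M[algC]_n) : unitary A -> A *m A = 1%:M -> dag A = A.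
Proof. by move=> [dagAA _] AA; rewrite -[dag A]mulmx1 -AA mulmxA dagAA mul1mx. Qed.

Lemma scalemx_injl (R : idomainType) m n (A : 'M[R]_(m, n)) :
  A != 0 -> injective (fun c => c *: A).
Proof.
move=> nzA c d /eqP; rewrite -subr_eq0 -scalerBl scalemx_eq0 (negbTE nzA) orbF subr_eq0.
by move/eqP.
Qed.

Lemma proportional_rows_notin_unitmx (T : finType) (F : fieldType) (A : T -> T -> F) x y c :
  x != y -> (forall z, A y z = c * A x z) ->
  \matrix_(i < #|T|, j < #|T|) A (enum_val i) (enum_val j) \notin unitmx.
Proof.
move=> neq_xy rowy; apply/negP.
set M := \matrix_(i < #|T|, j < #|T|) _ => unitA.
pose v : 'rV[F]_#|T| := delta_mx 0 (enum_rank y) - c *: delta_mx 0 (enum_rank x).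
have v0 : v = 0.
  rewrite -[v](mulmxK unitA) mulmxBl -scalemxAl -!rowE.
  suff -> : row (enum_rank y) M = c *: row (enum_rank x) M.
    by rewrite subrr mul0mx.
  by apply/rowP => j; rewrite !mxE !enum_rankK rowy.
move: (congr1 (fun w : 'rV[F]_#|T| => w 0 (enum_rank y)) v0).
rewrite !mxE !eqxx (inj_eq enum_rank_inj) eq_sym (negbTE neq_xy) mulr0 subr0.
by move/eqP; rewrite oner_eq0.
Qed.

Lemma eq_from_bits n i j : (i < 2 ^ n)%N -> (j < 2 ^ n)%N ->
  (forall q, (q < n)%N -> (i %/ 2 ^ q) %% 2 = (j %/ 2 ^ q) %% 2)%N -> i = j.
Proof.
elim: n i j => [|n IHn] i j; first by rewrite expn0 !ltnS !leqn0 => /eqP-> /eqP->.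
move=> lti ltj eq_bits.
have eq_half : (i %/ 2 = j %/ 2)%N.
  apply: IHn; rewrite ?ltn_divLR -?expnSr // => q ltqn.
  by have := eq_bits q.+1 ltqn; rewrite expnSr mulnC !divnMA.
have := eq_bits 0%N isT; rewrite !divn1 => eq_parity.
by rewrite (divn_eq i 2) (divn_eq j 2) eq_half eq_parity.
Qed.

Definition bits n (i : 'I_(2 ^ n)) : {ffun 'I_n -> 'I_2} := [ffun q : 'I_n => qbit q i].

Lemma bits_inj n : injective (@bits n).
Proof.
move=> i j /ffunP eq_bits; apply/val_inj/(@eq_from_bits n) => [||q ltqn]; try exact: ltn_ord.
by have /(congr1 val) := eq_bits (Ordinal ltqn); rewrite !ffunE /= !inordK ?ltn_pmod.
Qed.

Lemma bits_bij n : bijective (@bits n).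
Proof. by apply: (inj_card_bij (@bits_inj n)); rewrite card_ffun !card_ord. Qed.

Lemma sum_bits_prod (R : comPzRingType) n (F : 'I_n -> 'I_2 -> R) :
  \sum_(i < 2 ^ n) \prod_(q < n) F q (qbit q i) = \prod_(q < n) \sum_(b < 2) F q b.
Proof.
rewrite bigA_distr_bigA (reindex (@bits n)) /=; last exact/onW_bij/bits_bij.
by apply: eq_bigr => i _; apply: eq_bigr => q _; rewrite ffunE.
Qed.

Section TensorPower.
Variable R : comPzRingType.

Definition tensor_mx n (f : 'I_n -> 'M[R]_2) : 'M[R]_(2 ^ n) :=
  \matrix_(i, j) \prod_(q < n) f q (qbit q i) (qbit q j).

Lemma eq_tensor_mx n (f g : 'I_n -> 'M[R]_2) :
  (forall q, f q = g q) -> tensor_mx f = tensor_mx g.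
Proof.
by move=> eq_fg; apply/matrixP => i j; rewrite !mxE; apply: eq_bigr => q _; rewrite eq_fg.
Qed.

Lemma tensor_mx_mul n (f g : 'I_n -> 'M[R]_2) :
  tensor_mx f *m tensor_mx g = tensor_mx (fun q => f q *m g q).
Proof.
apply/matrixP => i j; rewrite !mxE.
under eq_bigr => l _ do rewrite !mxE -big_split /=.
rewrite (sum_bits_prod (fun q b => f q (qbit q i) b * g q b (qbit q j))).
by apply: eq_bigr => q _; rewrite mxE.
Qed.

Lemma tensor_mx1 n : tensor_mx (fun _ : 'I_n => 1%:M) = 1%:M.
Proof.
apply/matrixP => i j; rewrite !mxE; have [<-|neq_ij] := eqVneq i j.
  by rewrite big1 // => q _; rewrite mxE eqxx.
have /existsP[q neq_q] : [exists q : 'I_n, qbit q i != qbit q j].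
  apply: contraR neq_ij => /existsPn eq_bits; apply/eqP/bits_inj/ffunP => q.
  by rewrite !ffunE; apply/eqP/negPn/eq_bits.
by rewrite (bigD1 q) //= mxE (negbTE neq_q) mul0r.
Qed.

Lemma tensor_mxZ n (s : 'I_n -> R) (f : 'I_n -> 'M[R]_2) :
  tensor_mx (fun q => s q *: f q) = (\prod_q s q) *: tensor_mx f.
Proof.
by apply/matrixP => i j; rewrite !mxE -big_split; apply: eq_bigr => q _; rewrite mxE.
Qed.

End TensorPower.

Lemma dag_tensor_mx n (f : 'I_n -> 'M[algC]_2) :
  dag (tensor_mx f) = tensor_mx (fun q => dag (f q)).
Proof.
by apply/matrixP => i j; rewrite !mxE rmorph_prod; apply: eq_bigr => q _; rewrite !mxE.
Qed.

Definition sigma_anticomm (a b : 'I_4) : bool := [&& val a != 0%N, val b != 0%N & a != b].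

Ltac sigma_entries := rewrite ?mxE ?big_ord_recr ?big_ord0 /= ?mxE /=;
  rewrite ?(mul0r, mulr0, mul1r, mulr1, add0r, addr0, mulNr, mulrN, opprK, oppr0) ?raddfN /=;
  rewrite -?expr2 ?sqrCi ?conjCi ?conjC1 ?conjC0 ?opprK ?expr0 ?expr1 ?scale1r ?mulN1r.

Lemma sigma_sqr a : sigma a *m sigma a = 1%:M.
Proof.
by case: a => [[|[|[|[|a]]]] lta] //; apply/matrixP => i j; sigma_entries;
  case: i => [[|[|i]] lti] //; case: j => [[|[|j]] ltj]; sigma_entries.
Qed.

Lemma dag_sigma a : dag (sigma a) = sigma a.
Proof.
by case: a => [[|[|[|[|a]]]] lta] //; apply/matrixP => i j; sigma_entries;
  case: i => [[|[|i]] lti] //; case: j => [[|[|j]] ltj]; sigma_entries.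
Qed.

Lemma sigma_commute a b :
  sigma a *m sigma b = (-1) ^+ sigma_anticomm a b *: (sigma b *m sigma a).
Proof.
by case: a => [[|[|[|[|a]]]] lta] //; case: b => [[|[|[|[|b]]]] ltb] //;
  apply/matrixP => i j; sigma_entries;
  case: i => [[|[|i]] lti] //; case: j => [[|[|j]] ltj]; sigma_entries.
Qed.

Lemma pauli_stringE n (a : n.-tuple 'I_4) :
  pauli_string a = tensor_mx (fun q => sigma (tnth a q)).
Proof. by []. Qed.

Lemma pauli_string_sqr n (a : n.-tuple 'I_4) : pauli_string a *m pauli_string a = 1%:M.
Proof.
by rewrite pauli_stringE tensor_mx_mul (eq_tensor_mx (fun q => sigma_sqr _)) tensor_mx1.
Qed.

Lemma dag_pauli_string n (a : n.-tuple 'I_4) : dag (pauli_string a) = pauli_string a.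
Proof. by rewrite pauli_stringE dag_tensor_mx (eq_tensor_mx (fun q => dag_sigma _)). Qed.

Definition sign_commute N (A B : 'M[algC]_N) : Prop :=
  exists b : bool, A *m B = (-1) ^+ b *: (B *m A).

Lemma sign_commuteZr N (A B : 'M[algC]_N) c : sign_commute A B -> sign_commute A (c *: B).
Proof.
by move=> [b AB]; exists b; rewrite -scalemxAl -scalemxAr AB scalerA mulrC -scalerA.
Qed.

Lemma sign_commuteMr N (A B C : 'M[algC]_N) :
  sign_commute A B -> sign_commute A C -> sign_commute A (B *m C).
Proof.
move=> [b AB] [c AC]; exists (b (+) c).
by rewrite mulmxA AB -scalemxAl -mulmxA AC -scalemxAr scalerA signr_addb !mulmxA.
Qed.

Lemma pauli_string_sign_commute n (a c : n.-tuple 'I_4) :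
  sign_commute (pauli_string a) (pauli_string c).
Proof.
rewrite /sign_commute !pauli_stringE !tensor_mx_mul.
rewrite (eq_tensor_mx (fun q => sigma_commute _ _)) tensor_mxZ prodrXr -signr_odd.
by exists (odd (\sum_q sigma_anticomm (tnth a q) (tnth c q))).
Qed.

Lemma conjCi_expr_mul (c : nat) : ('i ^+ c : algC)^* * 'i ^+ c = 1.
Proof. by rewrite mulrC -normCK normrX normCi !expr1n. Qed.

Lemma pauli_group_unitary n (M : 'M[algC]_(2 ^ n)) : pauli_group M -> unitary M.
Proof.
move=> [c [a ->]]; rewrite /unitary dagZ dag_pauli_string -!scalemxAl -!scalemxAr.
by rewrite !scalerA pauli_string_sqr conjCi_expr_mul mulrC conjCi_expr_mul scale1r.
Qed.

Lemma pauli_group_dag n (M : 'M[algC]_(2 ^ n)) :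
  pauli_group M -> exists b : bool, dag M = (-1) ^+ b *: M.
Proof.
move=> [c [a ->]]; exists (odd c).
by rewrite dagZ dag_pauli_string rmorphXn /= conjCi [(- 'i) ^+ c]exprNn signr_odd scalerA.
Qed.

Lemma pauli_group_sign_commute n (M N : 'M[algC]_(2 ^ n)) :
  pauli_group M -> pauli_group N -> sign_commute M N.
Proof.
move=> [c [a ->]] [d [e ->]]; have [b ae] := pauli_string_sign_commute a e; exists b.
by rewrite -!scalemxAl -!scalemxAr !scalerA ae !scalerA; congr (_ *: _); ring.
Qed.

Lemma F2_addr_neq0 (a b : 'F_2) : (a + b != 0) = (a != 0) (+) (b != 0).
Proof. by case: a b => [[|[|?]] ?] [[|[|?]] ?]. Qed.

Lemma F2_rowN m (a : 'rV['F_2]_m) : - a = a.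
Proof. by apply/rowP => j; rewrite mxE; case: (a 0 j) => [[|[|?]] ?]; apply/val_inj. Qed.

Lemma oppr_fixed_eq0 (R : numDomainType) (x : R) : x = - x -> x = 0.
Proof. by move/eqP; rewrite -addr_eq0 -mulr2n mulrn_eq0 => /eqP. Qed.

Section Characters.
Variable m : nat.
Implicit Types (chi psi : Ghat m) (g : 'rV['F_2]_m).

Lemma charbD chi g1 g2 : val chi (g1 + g2) = val chi g1 (+) val chi g2.
Proof. by have /forallP/(_ g1)/forallP/(_ g2)/eqP := valP chi. Qed.

Lemma chi_valD chi g1 g2 : chi_val chi (g1 + g2) = chi_val chi g1 * chi_val chi g2.
Proof. by rewrite /chi_val charbD signr_addb. Qed.

Lemma chi_val_sqr chi g : chi_val chi g * chi_val chi g = 1.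
Proof. by rewrite -signr_addb addbb. Qed.

Lemma chi_val0 chi : chi_val chi 0 = 1.
Proof. by have := charbD chi 0 0; rewrite addr0 addbb /chi_val => ->. Qed.

Lemma conj_chi_val chi g : (chi_val chi g)^* = chi_val chi g.
Proof. exact: rmorph_sign. Qed.

Lemma Ghat1_subproof : is_charb ([ffun=> false] : {ffun 'rV['F_2]_m -> bool}).
Proof. by apply/forallP => g1; apply/forallP => g2; rewrite !ffunE. Qed.

Definition Ghat1 : Ghat m := exist (@is_charb m) _ Ghat1_subproof.

Lemma chi_val_Ghat1 g : chi_val Ghat1 g = 1.
Proof. by rewrite /chi_val ffunE. Qed.

Lemma is_triv_Ghat1 : is_triv Ghat1.
Proof. exact: chi_val_Ghat1. Qed.

Lemma Ghat_mul_subproof chi psi :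
  is_charb ([ffun g => val chi g (+) val psi g] : {ffun 'rV['F_2]_m -> bool}).
Proof.
apply/forallP => g1; apply/forallP => g2; rewrite !ffunE !charbD.
by case: (val chi g1) (val chi g2) (val psi g1) (val psi g2) => [] [] [] [].
Qed.

Definition Ghat_mul chi psi : Ghat m := exist (@is_charb m) _ (Ghat_mul_subproof chi psi).

Lemma chi_val_mul chi psi g : chi_val (Ghat_mul chi psi) g = chi_val chi g * chi_val psi g.
Proof. by rewrite /chi_val ffunE signr_addb. Qed.

Lemma Ghat_mulK chi : cancel (Ghat_mul chi) (Ghat_mul chi).
Proof. by move=> psi; apply/val_inj/ffunP => g; rewrite !ffunE addKb. Qed.

Lemma sum_chi_val chi :
  \sum_g chi_val chi g = if chi == Ghat1 then #|{: 'rV['F_2]_m}|%:R else 0.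
Proof.
have [->|ntriv] := eqVneq chi Ghat1.
  by rewrite (eq_bigr (fun _ => 1)) ?sumr_const // => g _; rewrite chi_val_Ghat1.
have /existsP[g0 chi_g0] : [exists g, val chi g].
  apply: contraR ntriv => /existsPn chi0; apply/eqP/val_inj/ffunP => g.
  by rewrite ffunE; apply/negbTE.
apply: oppr_fixed_eq0; rewrite {1}(reindex_inj (addIr g0)) -sumrN.
by apply: eq_bigr => g _; rewrite chi_valD /chi_val chi_g0 mulrN1.
Qed.

Lemma sum_char_val g :
  \sum_(chi : Ghat m) chi_val chi g = if g == 0 then #|{: Ghat m}|%:R else 0.
Proof.
have [->|nz] := eqVneq g 0.
  by rewrite (eq_bigr (fun _ => 1)) ?sumr_const // => chi _; rewrite chi_val0.
have /existsP[j gj] : [exists j, g 0 j != 0].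
  apply: contraR nz => /existsPn g0; apply/eqP/rowP => j.
  by rewrite mxE; apply/eqP/negPn/g0.
have coord_charb : is_charb [ffun x : 'rV['F_2]_m => x 0 j != 0].
  by apply/forallP => x; apply/forallP => y; rewrite !ffunE mxE F2_addr_neq0.
pose coord_char : Ghat m := exist (@is_charb m) _ coord_charb.
apply: oppr_fixed_eq0; rewrite {1}(reindex_inj (can_inj (Ghat_mulK coord_char))) -sumrN.
by apply: eq_bigr => chi _; rewrite chi_val_mul /chi_val ffunE gj mulN1r.
Qed.

Lemma card_Ghat : #|{: Ghat m}| = #|{: 'rV['F_2]_m}|.
Proof.
(* Double counting of the two orthogonality relations. *)
have : \sum_g \sum_(chi : Ghat m) chi_val chi g = \sum_(chi : Ghat m) \sum_g chi_val chi g.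
  exact: exchange_big.
under eq_bigr => g _ do rewrite sum_char_val.
under [RHS]eq_bigr => chi _ do rewrite sum_chi_val.
rewrite (bigD1 0) //= (bigD1 Ghat1) //= !eqxx !big1 => [|chi /negbTE -> //|g /negbTE -> //].
by rewrite !addr0 => /eqP; rewrite eqr_nat => /eqP.
Qed.

End Characters.

Lemma card_rowF2 m : #|{: 'rV['F_2]_m}| = (2 ^ m)%N.
Proof. by rewrite card_mx card_ord mul1n. Qed.

Section CodeSpace.
Variables (m N : nat) (U : 'rV['F_2]_m -> 'M[algC]_N) (Uh : Ghat m -> 'M[algC]_N).
Hypothesis U_unitary : forall g, unitary (U g).
Hypothesis U0 : U 0 = 1%:M.
Hypothesis UD : forall g1 g2, U (g1 + g2) = U g1 *m U g2.
Hypothesis Uh_unitary : forall chi, unitary (Uh chi).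
Hypothesis Uh_triv : forall chi, is_triv chi -> Uh chi = 1%:M.
Hypothesis UhM : forall chi psi phi,
  (forall g, chi_val phi g = chi_val chi g * chi_val psi g) -> Uh phi = Uh chi *m Uh psi.
Hypothesis U_Uh : forall g chi, U g *m Uh chi = chi_val chi g *: (Uh chi *m U g).

Local Notation Pi := (Pi_pn U).
Local Notation Ph := (Phat Uh).

Let card_neq0 : ((2 ^ m)%:R : algC) != 0.
Proof. by rewrite pnatr_eq0 expn_eq0. Qed.

Lemma U_sqr g : U g *m U g = 1%:M.
Proof. by rewrite -UD -[X in _ + X]F2_rowN subrr U0. Qed.

Lemma U_herm g : dag (U g) = U g.
Proof. exact: unitary_sqr1_herm (U_unitary g) (U_sqr g). Qed.

Lemma Uh1 : Uh (Ghat1 m) = 1%:M.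
Proof. exact/Uh_triv/is_triv_Ghat1. Qed.

Lemma Uh_sqr chi : Uh chi *m Uh chi = 1%:M.
Proof.
by rewrite -Uh1; symmetry; apply: UhM => g; rewrite chi_val_Ghat1 chi_val_sqr.
Qed.

Lemma Uh_herm chi : dag (Uh chi) = Uh chi.
Proof. exact: unitary_sqr1_herm (Uh_unitary chi) (Uh_sqr chi). Qed.

Lemma U_Pi g : U g *m Pi = Pi.
Proof.
rewrite /Pi_pn -scalemxAr mulmx_sumr; congr (_ *: _).
by rewrite [RHS](reindex_inj (addrI g)); apply: eq_bigr => x _; rewrite UD.
Qed.

Lemma Pi_U g : Pi *m U g = Pi.
Proof.
rewrite /Pi_pn -scalemxAl mulmx_suml; congr (_ *: _).
by rewrite [RHS](reindex_inj (addIr g)); apply: eq_bigr => x _; rewrite UD.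
Qed.

Lemma Pi_idem : Pi *m Pi = Pi.
Proof.
rewrite {1}/Pi_pn -scalemxAl mulmx_suml (eq_bigr _ (fun g _ => U_Pi g)) sumr_const.
by rewrite -scaler_nat scalerA mulVf ?scale1r // card_rowF2.
Qed.

Lemma Pi_herm : dag Pi = Pi.
Proof.
rewrite /Pi_pn dagZ dag_sum geC0_conj ?invr_ge0 ?ler0n //.
by congr (_ *: _); apply: eq_bigr => g _; rewrite U_herm.
Qed.

Lemma Uh_Pi_Uh chi : Uh chi *m Pi *m Uh chi =
  #|{: 'rV['F_2]_m}|%:R^-1 *: \sum_g chi_val chi g *: U g.
Proof.
rewrite /Pi_pn -scalemxAr -scalemxAl mulmx_sumr mulmx_suml; congr (_ *: _).
by apply: eq_bigr => g _; rewrite -mulmxA U_Uh -scalemxAr mulmxA Uh_sqr mul1mx.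
Qed.

Lemma sum_Uh_Pi_Uh : \sum_chi Uh chi *m Pi *m Uh chi = 1%:M.
Proof.
rewrite (eq_bigr _ (fun chi _ => Uh_Pi_Uh chi)) -scaler_sumr exchange_big /=.
under eq_bigr => g _ do rewrite -scaler_suml sum_char_val.
rewrite (bigD1 0) //= big1 => [|g /negbTE -> //]; last by rewrite scale0r.
by rewrite eqxx addr0 U0 scalerA card_Ghat mulVf ?scale1r // card_rowF2.
Qed.

Lemma Pi_Uh_Pi chi : Pi *m Uh chi *m Pi = if chi == Ghat1 m then Pi else 0.
Proof.
have -> : Pi *m Uh chi *m Pi =
    (#|{: 'rV['F_2]_m}|%:R^-1 * \sum_g chi_val chi g) *: (Uh chi *m Pi).
  rewrite {1}/Pi_pn -!scalemxAl !mulmx_suml -scalerA scaler_suml.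
  by congr (_ *: _); apply: eq_bigr => g _; rewrite U_Uh -scalemxAl -mulmxA U_Pi.
rewrite sum_chi_val; case: eqP => [->|_]; last by rewrite mulr0 scale0r.
by rewrite mulVf ?scale1r ?Uh1 ?mul1mx // card_rowF2.
Qed.

Lemma Phat_herm a : dag (Ph a) = Ph a.
Proof.
rewrite /Phat dagZ dag_sum geC0_conj ?invr_ge0 ?ler0n //.
by congr (_ *: _); apply: eq_bigr => chi _; rewrite dagZ conj_chi_val Uh_herm.
Qed.

Lemma Phat_mul a b : Ph a *m Ph b = if a == b then Ph a else 0.
Proof.
have Uh_mul chi psi : Uh chi *m Uh (Ghat_mul chi psi) = Uh psi.
  by rewrite (UhM (psi := psi) (chi_val_mul chi psi)) mulmxA Uh_sqr mul1mx.
rewrite /Phat -scalemxAl -scalemxAr scalerA mulmx_suml.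
under eq_bigr => chi _ do rewrite mulmx_sumr (reindex_inj (can_inj (Ghat_mulK chi))) /=.
under eq_bigr => chi _ do under eq_bigr => psi _ do
  rewrite -scalemxAl -scalemxAr Uh_mul scalerA chi_val_mul mulrA -chi_valD.
rewrite exchange_big /=.
under eq_bigr => psi _ do rewrite -scaler_suml -mulr_suml sum_char_val.
rewrite -[b in a + b]F2_rowN subr_eq0; case: eqP => [->|_]; last first.
  by rewrite big1 ?scaler0 // => psi _; rewrite mul0r scale0r.
under eq_bigr => psi _ do rewrite -scalerA.
by rewrite -scaler_sumr scalerA card_Ghat card_rowF2 mulfVK.
Qed.

Lemma Pi_Phat_Pi a : Pi *m Ph a *m Pi = (2 ^ m)%:R^-1 *: Pi.
Proof.
(* Abstracting Pi keeps the rewrites below from unfolding [Pi_pn]. *)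
have := Pi_Uh_Pi; move: (Pi_pn U) => P P_Uh_P.
rewrite /Phat -scalemxAr -scalemxAl mulmx_sumr mulmx_suml; congr (_ *: _).
under eq_bigr => chi _ do rewrite -scalemxAr -scalemxAl P_Uh_P.
rewrite (bigD1 (Ghat1 m)) //= eqxx chi_val_Ghat1 scale1r big1 ?addr0 // => chi /negbTE ->.
by rewrite scaler0.
Qed.

Lemma Pi_sign_commute X :
  (forall g, sign_commute (U g) X) -> Pi *m X *m Pi = 0 \/ Pi *m X = X *m Pi.
Proof.
move=> UX; have [/existsP[g0 /eqP noncomm]|/existsPn comm] :=
  boolP [exists g, U g *m X != X *m U g].
  left; have [[] UgX] := UX g0; last by rewrite expr0 scale1r in UgX.
  have PXP : Pi *m X *m Pi = - (Pi *m X *m Pi).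
    by rewrite -{1}(Pi_U g0) -(mulmxA _ (U g0)) UgX expr1 scaleN1r mulmxN mulNmx -!mulmxA U_Pi.
  by apply/matrixP => i j; rewrite [RHS]mxE; apply: oppr_fixed_eq0; rewrite {1}PXP mxE.
right; rewrite /Pi_pn -scalemxAl -scalemxAr mulmx_suml mulmx_sumr; congr (_ *: _).
by apply: eq_bigr => g _; apply/eqP/negPn/comm.
Qed.

Lemma Pi_neq0 : (0 < N)%N -> Pi != 0.
Proof.
move=> N_gt0; apply/eqP => Pi0; have := congr1 mxtrace sum_Uh_Pi_Uh.
rewrite Pi0 big1 => [|chi _]; last by rewrite mulmx0 mul0mx.
by rewrite mxtrace0 mxtrace1 => /eqP; rewrite eq_sym pnatr_eq0 (negbTE (lt0n_neq0 N_gt0)).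
Qed.

Variables (E : Ghat m -> 'M[algC]_N) (C : Ghat m -> Ghat m -> algC).
Hypothesis N_gt0 : (0 < N)%N.
Hypothesis E_unitary : forall chi, unitary (E chi).
Hypothesis E_dag : forall chi, exists b : bool, dag (E chi) = (-1) ^+ b *: E chi.
Hypothesis U_E : forall g chi, sign_commute (U g) (E chi).
Hypothesis E_triv : forall chi, is_triv chi -> E chi = 1%:M.
Hypothesis E_correctable : forall chi psi, Pi *m dag (E chi) *m E psi *m Pi = C chi psi *: Pi.
Hypothesis C_unit :
  \matrix_(i < #|{: Ghat m}|, j < #|{: Ghat m}|) C (enum_val i) (enum_val j) \in unitmx.

Lemma Pi_dag_mul_Pi (A B : 'M[algC]_N) :
  Pi *m dag A *m B *m Pi = dag (A *m Pi) *m (B *m Pi).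
Proof. by rewrite dagM Pi_herm !mulmxA. Qed.

Lemma C_diag chi : C chi chi = 1.
Proof.
apply: (scalemx_injl (Pi_neq0 N_gt0)); rewrite /= -E_correctable scale1r.
by rewrite -(mulmxA Pi) (E_unitary chi).1 mulmx1 Pi_idem.
Qed.

Lemma E_Pi_proportional chi psi :
  C chi psi != 0 -> E psi *m Pi = C chi psi *: (E chi *m Pi).
Proof.
move=> nzC; set X := dag (E chi) *m E psi.
have UX g : sign_commute (U g) X.
  rewrite /X; have [b ->] := E_dag chi.
  exact: sign_commuteMr (sign_commuteZr _ (U_E g chi)) (U_E g psi).
have PXP : Pi *m X *m Pi = C chi psi *: Pi by rewrite mulmxA E_correctable.
have XPi : X *m Pi = C chi psi *: Pi.
  have [PXP0|PX] := Pi_sign_commute UX.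
    move/eqP: PXP; rewrite PXP0 eq_sym scalemx_eq0 (negbTE nzC).
    by rewrite (negbTE (Pi_neq0 N_gt0)).
  by rewrite -PXP PX -mulmxA Pi_idem.
by rewrite scalemxAr -XPi /X !mulmxA (E_unitary chi).2 mul1mx.
Qed.

Lemma C_offdiag chi psi : chi != psi -> C chi psi = 0.
Proof.
(* Otherwise row psi of C is a multiple of row chi. *)
move=> neq; apply/eqP; apply: contraTT C_unit => nzC.
apply: (proportional_rows_notin_unitmx (c := (C chi psi)^*) neq) => phi.
apply: (scalemx_injl (Pi_neq0 N_gt0)); rewrite /= -scalerA -!E_correctable !Pi_dag_mul_Pi.
by rewrite (E_Pi_proportional nzC) dagZ -scalemxAl.
Qed.

Lemma Pi_dagE_E_Pi chi psi : Pi *m dag (E chi) *m E psi *m Pi = (chi == psi)%:R *: Pi.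
Proof.
rewrite E_correctable; have [->|neq] := eqVneq chi psi; first by rewrite C_diag.
by rewrite C_offdiag.
Qed.

Lemma Pi_E_Pi chi : chi != Ghat1 m -> Pi *m E chi *m Pi = 0.
Proof.
move=> ntriv; have := Pi_dagE_E_Pi (Ghat1 m) chi.
by rewrite eq_sym (negbTE ntriv) scale0r (E_triv (@is_triv_Ghat1 m)) dag1 mulmx1.
Qed.

Lemma sum_E_Pi_dagE : \sum_chi E chi *m Pi *m dag (E chi) = 1%:M.
Proof.
(* The E chi *m Pi *m dag (E chi) are orthogonal projections of total trace N. *)
set Q := \sum_chi _.
have Q_herm : dag Q = Q.
  by rewrite dag_sum; apply: eq_bigr => chi _; rewrite !dagM dagK Pi_herm mulmxA.
have orth chi psi : E chi *m Pi *m dag (E chi) *m (E psi *m Pi *m dag (E psi)) =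
    (chi == psi)%:R *: (E chi *m Pi *m dag (E psi)).
  transitivity (E chi *m (Pi *m dag (E chi) *m E psi *m Pi) *m dag (E psi)).
    by rewrite !mulmxA.
  by rewrite Pi_dagE_E_Pi -scalemxAr -scalemxAl.
have Q_idem : Q *m Q = Q.
  rewrite mulmx_suml; apply: eq_bigr => chi _; rewrite mulmx_sumr (bigD1 chi) //=.
  rewrite orth eqxx scale1r big1 ?addr0 // => psi neq.
  by rewrite orth eq_sym (negbTE neq) scale0r.
have trQ : \tr Q = \tr (1%:M : 'M[algC]_N).
  rewrite -sum_Uh_Pi_Uh !raddf_sum; apply: eq_bigr => chi _ /=.
  by rewrite mxtrace_mulC [RHS]mxtrace_mulC !mulmxA (E_unitary chi).1 Uh_sqr !mul1mx.
apply/eqP; rewrite eq_sym -subr_eq0; apply/eqP/herm_idem_mxtrace0.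
- by rewrite dagB dag1 Q_herm.
- by rewrite mulmxBl mul1mx mulmxBr mulmx1 Q_idem subrr subr0.
- by rewrite raddfB /= -trQ subrr.
Qed.

Lemma sum_dagE_Pi_E : \sum_chi dag (E chi) *m Pi *m E chi = 1%:M.
Proof.
rewrite -sum_E_Pi_dagE; move: (Pi_pn U) => P.
by apply: eq_bigr => chi _; have [b ->] := E_dag chi; rewrite -!scalemxAl -scalemxAr.
Qed.

Variable h : Ghat m -> 'rV['F_2]_m -> 'rV['F_2]_m.
Hypothesis h_bij : forall g, bijective (fun chi => h chi g).
Hypothesis h_triv : forall chi g, is_triv chi -> h chi g = g.

Definition recovery_op g : 'M[algC]_N :=
  sqrtC (2 ^ m)%:R *: \sum_chi Ph (h chi g) *m Pi *m E chi.

Lemma recovery_op_dag_mul g : dag (recovery_op g) *m recovery_op g = 1%:M.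
Proof.
have term chi psi : dag (Ph (h chi g) *m Pi *m E chi) *m (Ph (h psi g) *m Pi *m E psi) =
    ((chi == psi)%:R / (2 ^ m)%:R) *: (dag (E chi) *m Pi *m E chi).
  rewrite !dagM Phat_herm Pi_herm.
  transitivity (dag (E chi) *m (Pi *m (Ph (h chi g) *m Ph (h psi g)) *m Pi) *m E psi).
    by rewrite !mulmxA.
  rewrite Phat_mul (inj_eq (bij_inj (h_bij g))); have [<-|_] := eqVneq chi psi.
    by rewrite Pi_Phat_Pi -scalemxAr -scalemxAl mul1r.
  by rewrite mulmx0 mul0mx mulmx0 mul0mx mul0r scale0r.
have row chi : dag (Ph (h chi g) *m Pi *m E chi) *m \sum_psi Ph (h psi g) *m Pi *m E psi =
    (2 ^ m)%:R^-1 *: (dag (E chi) *m Pi *m E chi).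
  rewrite mulmx_sumr (bigD1 chi) //= term eqxx mul1r big1 ?addr0 // => psi neq.
  by rewrite term eq_sym (negbTE neq) mul0r scale0r.
have sqrt_norm : (sqrtC (2 ^ m)%:R)^* * sqrtC (2 ^ m)%:R = (2 ^ m)%:R :> algC.
  by rewrite geC0_conj ?sqrtC_ge0 ?ler0n // -expr2 sqrtCK.
rewrite /recovery_op dagZ dag_sum -scalemxAl -scalemxAr scalerA sqrt_norm mulmx_suml.
rewrite (eq_bigr _ (fun chi _ => row chi)) -scaler_sumr sum_dagE_Pi_E.
by rewrite scalerA mulfV ?scale1r.
Qed.

Lemma recovery_op_Pi g : recovery_op g *m Pi = sqrtC (2 ^ m)%:R *: (Ph g *m Pi).
Proof.
rewrite /recovery_op -scalemxAl mulmx_suml (bigD1 (Ghat1 m)) //= big1 ?addr0.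
  by rewrite (h_triv _ (@is_triv_Ghat1 m)) (E_triv (@is_triv_Ghat1 m)) mulmx1 -mulmxA Pi_idem.
by move=> chi ntriv; rewrite -!mulmxA (mulmxA Pi) Pi_E_Pi // mulmx0.
Qed.

End CodeSpace.

Theorem mainTheorem16 (n k : nat) (hk : (k < n)%N)
  (U : 'rV['F_2]_(n - k) -> 'M[algC]_(2 ^ n))
  (Uh : Ghat (n - k) -> 'M[algC]_(2 ^ n))
  (E : Ghat (n - k) -> 'M[algC]_(2 ^ n))
  (h : Ghat (n - k) -> 'rV['F_2]_(n - k) -> 'rV['F_2]_(n - k)) :
  (* U : G -> P_n is a faithful unitary representation with -I not in U(G) *)
  (forall g, pauli_group (U g)) ->
  (forall g, unitary (U g)) ->
  U 0 = 1%:M ->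
  (forall g1 g2, U (g1 + g2) = U g1 *m U g2) ->
  injective U ->
  (forall g, U g != - 1%:M) ->
  (* hat U : hat G -> unitaries, a representation dual to U *)
  (forall chi, unitary (Uh chi)) ->
  (forall chi, is_triv chi -> Uh chi = 1%:M) ->
  (forall chi psi phi, (forall g, chi_val phi g = chi_val chi g * chi_val psi g) ->
      Uh phi = Uh chi *m Uh psi) ->
  (forall g chi, U g *m Uh chi = chi_val chi g *: (Uh chi *m U g)) ->
  (* {E_chi} subset of P_n, correctable, maximal and non-degenerate *)
  (forall chi, pauli_group (E chi)) ->
  (exists C : Ghat (n - k) -> Ghat (n - k) -> algC,
     [/\ forall chi psi,
           Pi_pn U *m dag (E chi) *m E psi *m Pi_pn U = C chi psi *: Pi_pn U,
         forall chi psi, C psi chi = (C chi psi)^*,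
         \rank (\matrix_(i < #|{: Ghat (n - k)}|, j < #|{: Ghat (n - k)}|)
                  C (enum_val i) (enum_val j)) = (2 ^ (n - k))%N
       & (\matrix_(i < #|{: Ghat (n - k)}|, j < #|{: Ghat (n - k)}|)
                  C (enum_val i) (enum_val j)) \in unitmx]) ->
  (* E_1 = I and E_chi(H_pn) is orthogonal to H_pn for chi <> 1 *)
  (forall chi, is_triv chi -> E chi = 1%:M) ->
  (forall chi, ~ is_triv chi -> forall v w : 'cV[algC]_(2 ^ n),
      Pi_pn U *m v = v -> Pi_pn U *m w = w -> dag w *m (E chi *m v) = 0) ->
  (* h(., g) is a bijection with h(1, g) = g *)
  (forall g, bijective (fun chi => h chi g)) ->
  (forall chi g, is_triv chi -> h chi g = g) ->
  forall g,
    let Ehat := sqrtC (2 ^ (n - k))%:R *: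
                  \sum_(chi : Ghat (n - k))
                     Phat Uh (h chi g) *m Pi_pn U *m E chi in
    unitary Ehat /\
    Ehat *m Pi_pn U = sqrtC (2 ^ (n - k))%:R *: (Phat Uh g *m Pi_pn U).
Proof.
move=> U_pauli U_unitary U0 UD _ _ Uh_unitary Uh_triv UhM U_Uh E_pauli
  [C [E_correctable _ _ C_unit]] E_triv _ h_bij h_triv g Ehat.
have N_gt0 : (0 < 2 ^ n)%N by rewrite expn_gt0.
have E_unitary chi := pauli_group_unitary (E_pauli chi).
have E_dag chi := pauli_group_dag (E_pauli chi).
have U_E g' chi := pauli_group_sign_commute (U_pauli g') (E_pauli chi).
have Ehat_dag_mul : dag Ehat *m Ehat = 1%:M.
  exact: (recovery_op_dag_mul U_unitary U0 UD Uh_unitary Uh_triv UhM U_Uh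
            N_gt0 E_unitary E_dag U_E E_correctable C_unit h_bij).
split; first by split; last exact: mulmx1C Ehat_dag_mul.
exact: (recovery_op_Pi U_unitary U0 UD Uh_triv UhM U_Uh
          N_gt0 E_unitary E_dag U_E E_triv E_correctable C_unit h_triv).
Qed.
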